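(* Let $f:G\to H$ be a group homomorphism with $H$ nontrivial. (1) If $H$ is torsion free, then $f$ is locally sectionable if and only if $f$ is surjective. (2) If $H$ is a torsion group, then $f$ is locally sectionable if and only if for each $b\in H$ there exists $a\in G$ with $f(a)=b$ and $o(a)=o(b)$.
   Context: $o(g)$ denotes the order of an element $g$. For a homomorphism $f:G\to H$ and a subgroup $L\le H$, a local section of $f$ on $L$ is a homomorphism $s:L\to G$ with $f\circ s=\mathrm{incl}_L$, where $\mathrm{incl}_L:L\hookrightarrow H$ is the inclusion. The homomorphism $f$ is called locally sectionable if for every $b\in H$ with $b\neq 1$ there is a subgroup $L\le H$ with $b\in L$ such that $f$ admits a local section on $L$. *)

From HB Require Import structures.
From mathcomp Require Import all_boot.
From Stdlib Require Import ClassicalEpsilon.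
Set Implicit Arguments. Unset Strict Implicit. Unset Printing Implicit Defensive.

Local Open Scope group_scope.

(* Order of an element: the least n > 0 with g ^+ n = 1, and 0 if there is
   no such n (i.e. 0 encodes infinite order). *)
Definition elt_order (G : groupType) (g : G) : nat :=
  match excluded_middle_informative (exists n, (0 < n)%N && (g ^+ n == 1)) with
  | left P => ex_minn P
  | right _ => 0%N
  end.

Definition is_subgroup (H : groupType) (L : H -> Prop) : Prop :=
  [/\ L 1, (forall x y, L x -> L y -> L (x * y)) & (forall x, L x -> L x^-1)].

(* s is a local section of f on L: a homomorphism L -> G (s is only relevant on L)
   with f (s x) = x for x in L. *)
Definition local_section (G H : groupType) (f : G -> H) (L : H -> Prop)
    (s : H -> G) : Prop :=
  (forall x y, L x -> L y -> s (x * y) = s x * s y) /\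
  (forall x, L x -> f (s x) = x).

Definition locally_sectionable (G H : groupType) (f : G -> H) : Prop :=
  forall b : H, b <> 1 ->
    exists L : H -> Prop, [/\ is_subgroup L, L b & exists s, local_section f L s].

Definition torsion_free (H : groupType) : Prop :=
  forall h : H, h <> 1 -> forall n, (0 < n)%N -> h ^+ n <> 1.

Definition torsion_group (H : groupType) : Prop :=
  forall h : H, exists n, (0 < n)%N /\ h ^+ n = 1.

From HB Require Import structures.
From mathcomp Require Import all_boot.
From Stdlib Require Import ClassicalEpsilon.
Set Implicit Arguments. Unset Strict Implicit. Unset Printing Implicit Defensive.
Local Open Scope group_scope.

(* f is locally sectionable iff every b in H has a preimage a with a ^+ n = 1
   whenever b ^+ n = 1.  A local section s on a subgroup containing b yields
   a := s b; conversely, such an a makes b ^+ k |-> a ^+ k a well-defined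
   homomorphism on the cyclic subgroup generated by b.  When H is torsion
   free the condition on a is empty for b <> 1; in general, since f a = b
   already gives a ^+ n = 1 -> b ^+ n = 1, it says that a and b have the same
   order. *)

Lemma elt_order_dvdn (G : groupType) (g : G) n : g ^+ n = 1 <-> (elt_order g %| n)%N.
Proof.
rewrite /elt_order; case: excluded_middle_informative => [ex|no_ex]; last first.
  rewrite dvd0n; split=> [gn|/eqP-> //]; apply/negPn/negP => n_neq0.
  by apply: no_ex; exists n; rewrite lt0n n_neq0 gn eqxx.
case: ex_minnP => m /andP[m_gt0 /eqP gm] m_min.
split=> [gn|/dvdnP[q ->]]; last by rewrite mulnC expgnA gm expg1n.
have g_mod : g ^+ (n %% m) = 1.
  by move: gn; rewrite {1}(divn_eq n m) expgnDr mulnC expgnA gm expg1n mul1g.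
apply/negPn/negP => mod_neq0.
have m_le : (m <= n %% m)%N by apply: m_min; rewrite lt0n mod_neq0 g_mod eqxx.
by rewrite leqNgt ltn_pmod in m_le.
Qed.

Lemma eq_elt_order (G H : groupType) (g : G) (h : H) :
  elt_order g = elt_order h <-> forall n, g ^+ n = 1 <-> h ^+ n = 1.
Proof.
split=> [o_gh n|same_ker].
  by split=> /elt_order_dvdn; [rewrite o_gh | rewrite -o_gh] => /elt_order_dvdn.
apply/eqP; rewrite eqn_dvd; apply/andP.
by split; apply/elt_order_dvdn; [apply/same_ker | apply/same_ker];
  apply/elt_order_dvdn.
Qed.

Lemma expg_eq_transfer (G H : groupType) (g : G) (h : H) :
  (forall n, h ^+ n = 1 -> g ^+ n = 1) ->
  forall i j, h ^+ i = h ^+ j -> g ^+ i = g ^+ j.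
Proof.
move=> h_ker i j; wlog le_ij : i j / (i <= j)%N.
  move=> wlog_le hij; case/orP: (leq_total i j) => le; first exact: wlog_le.
  by apply/esym; apply: wlog_le le (esym hij).
move=> hij; apply/esym/divg1_eq; rewrite -expgnFr // h_ker //.
by rewrite expgnFr // hij divgg.
Qed.

Section PowerQuotients.
Variable G : groupType.
Implicit Types (g : G) (p q : nat * nat).

(* Exponents are natural numbers, so the cyclic subgroup generated by g is
   described as the set of all powq g p. *)
Definition powq g p := g ^+ p.1 / g ^+ p.2.

Lemma powqM g p q : powq g p * powq g q = powq g (p.1 + q.1, p.2 + q.2)%N.
Proof.
have commVX : commute (g ^+ p.2)^-1 (g ^+ q.1).
  by apply: commute_sym; apply: commuteV; apply: commuteX2.
rewrite /powq mulgA -(mulgA (g ^+ p.1)) commVX mulgA -expgnDr -mulgA.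
by rewrite /= -invgM -(expgnDr g q.2) (addnC q.2).
Qed.

Lemma powqV g p : (powq g p)^-1 = powq g (p.2, p.1).
Proof. by rewrite invgF. Qed.

Lemma powq_mulX g p k : powq g p * g ^+ (p.2 + k) = g ^+ (p.1 + k).
Proof. by rewrite /powq expgnDr divgKA -expgnDr. Qed.

Lemma eq_powq g p q :
  powq g p = powq g q <-> g ^+ (p.1 + q.2) = g ^+ (q.1 + p.2).
Proof.
split=> [pq|pq]; first by rewrite -powq_mulX pq addnC powq_mulX.
apply: (@mulIg _ (g ^+ (p.2 + q.2))).
by rewrite powq_mulX [(p.2 + q.2)%N]addnC powq_mulX.
Qed.

End PowerQuotients.

Section CyclicLift.
Variables (G H : groupType) (f : G -> H) (fM : {morph f : x y / x * y}).

Lemma morph1 : f 1 = 1.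
Proof. by apply: (@mulgI _ (f 1)); rewrite -fM !mulg1. Qed.

HB.instance Definition _ := isUMagmaMorphism.Build G H f (morph1, fM).

Lemma morph_expg_eq1 x n : x ^+ n = 1 -> f x ^+ n = 1.
Proof. by move=> xn1; rewrite -gmulfXn xn1 gmulf1. Qed.

Definition cycle_of (b : H) (x : H) : Prop := exists p, x = powq b p.

Lemma cycle_of_subgroup b : is_subgroup (cycle_of b).
Proof.
split.
- by exists (0, 0)%N; rewrite /powq invg1 mulg1.
- by move=> _ _ [p ->] [q ->]; exists (p.1 + q.1, p.2 + q.2)%N; rewrite powqM.
- by move=> _ [p ->]; exists (p.2, p.1); rewrite powqV.
Qed.

Lemma cycle_of_gen b : cycle_of b b.
Proof. by exists (1, 0)%N; rewrite /powq invg1 mulg1. Qed.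

Definition cycle_lift (a : G) (b : H) (x : H) : G :=
  powq a (epsilon (inhabits (0, 0)%N) (fun p => x = powq b p)).

Variables (a : G) (b : H).
Hypothesis fab : f a = b.
Hypothesis b_ker : forall n, b ^+ n = 1 -> a ^+ n = 1.

Lemma cycle_liftE p : cycle_lift a b (powq b p) = powq a p.
Proof.
have /esym/eq_powq bpq :=
  epsilon_spec (inhabits (0, 0)%N) (fun r => powq b p = powq b r) (ex_intro _ p erefl).
by apply/eq_powq; apply: expg_eq_transfer b_ker _ _ bpq.
Qed.

Lemma cycle_lift_section : local_section f (cycle_of b) (cycle_lift a b).
Proof.
split=> [_ _ [p ->] [q ->]|_ [p ->]]; first by rewrite powqM !cycle_liftE powqM.
by rewrite cycle_liftE /powq -fab gmulfM gmulfV !gmulfXn.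
Qed.

End CyclicLift.

Section LocalSections.
Variables (G H : groupType) (f : G -> H) (L : H -> Prop) (s : H -> G).
Hypotheses (L_subgroup : is_subgroup L) (s_section : local_section f L s).

Lemma subgroup_expg x n : L x -> L (x ^+ n).
Proof.
case: L_subgroup => L1 LM _ Lx.
by elim: n => [|n IHn] //; rewrite expgS; apply: LM.
Qed.

Lemma local_section1 : s 1 = 1.
Proof.
case: L_subgroup s_section => L1 _ _ [sM _].
by apply: (@mulgI _ (s 1)); rewrite -sM ?mulg1.
Qed.

Lemma local_section_expg x n : L x -> s (x ^+ n) = s x ^+ n.
Proof.
case: s_section => sM _ Lx; elim: n => [|n IHn]; first exact: local_section1.
by rewrite !expgS sM ?IHn //; apply: subgroup_expg.
Qed.

End LocalSections.

Lemma locally_sectionableP (G H : groupType) (f : G -> H)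
    (fM : {morph f : x y / x * y}) :
  locally_sectionable f <->
  forall b, exists2 a, f a = b & forall n, b ^+ n = 1 -> a ^+ n = 1.
Proof.
split=> [LS b|lift b _].
  have [->|/eqP b_neq1] := eqVneq b 1.
    by exists 1 => [|n _]; rewrite ?expg1n // (morph1 fM).
  have [L [L_subgroup Lb [s s_section]]] := LS b b_neq1.
  exists (s b); first by case: s_section => _; apply.
  move=> n bn; rewrite -(local_section_expg L_subgroup s_section) // bn.
  exact: local_section1 L_subgroup s_section.
have [a fab b_ker] := lift b.
exists (cycle_of b); split; [exact: cycle_of_subgroup | exact: cycle_of_gen |].
by exists (cycle_lift a b); apply: cycle_lift_section.
Qed.

Theorem lemma2p4 (G H : groupType) (f : G -> H)
    (fM : {morph f : x y / x * y}) (Hnt : exists h : H, h <> 1) :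
  (torsion_free H -> (locally_sectionable f <-> forall b : H, exists a : G, f a = b)) /\
  (torsion_group H ->
     (locally_sectionable f <->
      forall b : H, exists a : G, f a = b /\ elt_order a = elt_order b)).
Proof.
split=> [tfH|_]; split=> [/(locally_sectionableP fM) lift b|lift_b].
- by have [a fab _] := lift b; exists a.
- apply/(locally_sectionableP fM) => b; have [->|/eqP b_neq1] := eqVneq b 1.
    by exists 1 => [|n _]; rewrite ?expg1n // (morph1 fM).
  have [a fab] := lift_b b; exists a => // -[|n] // bn.
  by have := tfH b b_neq1 n.+1 isT bn.
- have [a fab b_ker] := lift b; exists a; split=> //.
  by apply/eq_elt_order => n; split=> [|/b_ker //]; rewrite -fab; apply: morph_expg_eq1.
- apply/(locally_sectionableP fM) => b; have [a [fab /eq_elt_order o_ab]] := lift_b b.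
  by exists a => // n /o_ab.
Qed.
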